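(* Let $\mathcal C$ be a concept hierarchy, $r_1,r_2,\epsilon\in[0,1]$, $a>0$ a real with $r_1\le ar_2(1-\epsilon)$, $m$ a positive integer, and let $\mathcal A_1$ and $\mathcal L$ be the networks defined below (with $\mathcal L$ having fixed sets $F$ and $E$ satisfying the stated constraints). Then $\mathcal L$ $implements_1$ $\mathcal A_1$: for every $B\subseteq C_0$, in the executions of $\mathcal A_1$ and $\mathcal L$ on input $B$, for every concept $c$, if $rep(c)$ fires at time $level(c)$ in $\mathcal A_1$, then at least $m(1-\epsilon)$ of the neurons in $reps(c)$ fire at time $level(c)$ in $\mathcal L$.
   Context: Concept hierarchies: fix positive integers $\ell_{max},n,k$. A universal set $D$ of concepts is partitioned into disjoint sets $D_0,\dots,D_{\ell_{max}}$ with $|D_0|=n$; $level(c)=\ell$ for $c\in D_\ell$. A concept hierarchy $\mathcal C$ consists of $C\subseteq D$, with $C_\ell=C\cap D_\ell$, and for each $c\in C_\ell$ with $1\le\ell\le\ell_{max}$ a set $children(c)\subseteq C_{\ell-1}$, such that $|C_{\ell_{max}}|=k$, $|children(c)|=k$ for all such $c$, and $children(c)\cap children(c')=\emptyset$ for distinct $c,c'\in C_\ell$. Common network dynamics: neurons partitioned into layers $N_0,\dots,N_{\ell_{max}}$; threshold $\tau$; weights $w(u,v)\in\{0,1\}$ for $u\in N_{\ell-1}$, $v\in N_\ell$. Failed neurons never fire. A non-failed neuron $v\in N_\ell$, $\ell\ge1$, does not fire at time 0 and fires at time $t\ge1$ iff $\sum_{u\in N_{\ell-1}}w(u,v)x_u(t-1)\ge\tau$,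 where $x_u(s)\in\{0,1\}$ indicates whether $u$ fires at time $s$. $\mathcal A_1$: no failures; each $c\in D_0$ has $rep(c)\in N_0$, each $c\in C$ with $level(c)\ge1$ has $rep(c)\in N_{level(c)}$, all distinct; $w(u,v)=1$ iff $v=rep(c)$, $u=rep(c')$ for a child $c'$ of $c$, else $0$; $\tau=r_2k$. Input $B\subseteq C_0$: the layer-0 neurons $rep(b)$, $b\in B$, fire at time 0, no other layer-0 neuron fires at time 0, and no layer-0 neuron fires at any other time. $\mathcal L$: each $c\in D_0$ has a set $reps(c)$ of $m$ neurons in $N_0$, each $c\in C$ with $level(c)\ge1$ a set $reps(c)$ of $m$ neurons in $N_{level(c)}$, all pairwise disjoint. $E$ is a set of pairs $(u,v)$ with $v\in reps(c)$ and $u\in reps(c')$ for some child $c'$ of $c$; $w(u,v)=1$ iff $(u,v)\in E$, else $0$. Threshold $\tau=ar_2km(1-\epsilon)$. A fixed set $F$ of neurons is failed. Constraints: for every concept $c$, at least $m(1-\epsilon)$ neurons of $reps(c)$ are not in $F$; and for every $c$ with $level(c)\ge1$, every $v\in reps(c)$ and every child $c'$ of $c$, there are at least $am(1-\epsilon)$ neurons $u\in reps(c')\setminus F$ with $(u,v)\in E$. Input $B\subseteq C_0$: a layer-0 neuron fires at time 0 iff it is in $\bigcup_{b\in B}reps(b)\setminus F$, and no layer-0 neuron fires at any other time. *)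

From mathcomp Require Import all_boot all_order all_algebra.
Set Implicit Arguments. Unset Strict Implicit. Unset Printing Implicit Defensive.
Import Order.TTheory GRing.Theory Num.Theory.
Local Open Scope ring_scope.

(* Generic network dynamics.  [layer v] is the layer index of neuron v,
   [w u v] the (0/1) weight from u to v (only consecutive layers count),
   [tau] the threshold, [failed] the failed neurons, [inp] the layer-0
   neurons that are stimulated at time 0.  [fires t v] = x_v(t). *)
Definition fires (R : numDomainType) (N : finType) (layer : N -> nat)
  (w : rel N) (tau : R) (failed : pred N) (inp : pred N) : nat -> N -> bool :=
  fix f t := match t with
  | 0 => fun v => [&& layer v == 0%N, inp v & ~~ failed v]
  | t'.+1 => fun v =>
      [&& ~~ failed v, layer v != 0%N &
          tau <= \sum_(u : N | (layer u).+1 == layer v)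
                   (((w u v && f t' u) : nat)%:R : R)]
  end.

Definition concept_hierarchy (D : finType) (lmax n k : nat) (level : D -> nat)
  (C : {set D}) (children : D -> {set D}) : Prop :=
  [/\ (forall c, level c <= lmax)%N,
      #|[set c | level c == 0%N]| = n /\
      #|[set c in C | level c == lmax]| = k,
      (forall c, c \in C -> (0 < level c)%N ->
         children c \subset [set c' in C | (level c').+1 == level c]),
      (forall c, c \in C -> (0 < level c)%N -> #|children c| = k) &
      (forall c c', c \in C -> c' \in C -> level c = level c' -> (0 < level c)%N ->
         c != c' -> [disjoint children c & children c'])].

(* The concepts that have representing neurons: all of D_0 and all of C. *)
Definition concept (D : finType) (level : D -> nat) (C : {set D}) (c : D) : bool :=
  (level c == 0%N) || (c \in C).

Definition A1_rep_ok (D : finType) (level : D -> nat) (C : {set D})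
  (N : finType) (layer : N -> nat) (rep : D -> N) : Prop :=
  (forall c c', concept level C c -> concept level C c' -> rep c = rep c' -> c = c') /\
  (forall c, concept level C c -> layer (rep c) = level c).

Definition A1_w (D : finType) (level : D -> nat) (C : {set D})
  (children : D -> {set D}) (N : finType) (rep : D -> N) : rel N :=
  fun u v => [exists c, exists c', [&& c \in C, (0 < level c)%N,
                 c' \in children c, v == rep c & u == rep c']].

Definition A1_input (D : finType) (N : finType) (rep : D -> N) (B : {set D}) : pred N :=
  fun u => [exists b in B, u == rep b].

Definition L_ok (R : numDomainType) (D : finType) (level : D -> nat) (C : {set D})
  (children : D -> {set D}) (N : finType) (layer : N -> nat)
  (reps : D -> {set N}) (E : rel N) (F : {set N}) (eps a : R) (m : nat) : Prop :=
  [/\ (forall c, concept level C c -> #|reps c| = m) /\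
      (forall c, concept level C c -> forall v, v \in reps c -> layer v = level c),
      (forall c c', concept level C c -> concept level C c' -> c != c' ->
         [disjoint reps c & reps c']),
      (forall u v, E u v -> exists c c', [/\ c \in C, (0 < level c)%N,
          c' \in children c, v \in reps c & u \in reps c']),
      (forall c, concept level C c -> m%:R * (1 - eps) <= #|reps c :\: F|%:R) &
      (forall c c', c \in C -> (0 < level c)%N -> c' \in children c ->
         forall v, v \in reps c ->
           a * m%:R * (1 - eps) <= #|[set u in reps c' :\: F | E u v]|%:R)].

Definition L_input (D : finType) (N : finType) (reps : D -> {set N}) (B : {set D}) : pred N :=
  fun u => [exists b in B, u \in reps b].

From mathcomp Require Import all_boot all_order all_algebra ring.
Set Implicit Arguments. Unset Strict Implicit. Unset Printing Implicit Defensive.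
Import Order.TTheory GRing.Theory Num.Theory.
Local Open Scope ring_scope.

(* If rep c fires at time l+1 in A1, at least r2 k
   children c' of c had rep c' firing at time l; by induction every non-failed
   neuron of each reps c' fires at time l in L.  A non-failed v in reps c has at
   least a m (1 - eps) non-failed E-predecessors in each reps c', and these sets
   are disjoint, so v receives at least r2 k * a m (1 - eps), the threshold of L.
   Hence all of reps c :\: F fires, and it has at least m (1 - eps) elements. *)

Lemma sum_nat_bool_card (T : finType) (P b : pred T) :
  (\sum_(u | P u) (b u : nat) = #|[set u | P u & b u]|)%N.
Proof. by rewrite -sum1dep_card big_mkcondr; apply: eq_bigr => u _; case: (b u). Qed.

Lemma card_bigcup_disjoint (I T : finType) (S : {set I}) (X : I -> {set T}) :
  {in S &, forall i j, i != j -> [disjoint X i & X j]} ->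
  #|\bigcup_(i in S) X i| = (\sum_(i in S) #|X i|)%N.
Proof.
elim: {S}_.+1 {-2}S (ltnSn #|S|) => // s IH S ltSs disX.
have [->|[i0 i0S]] := set_0Vmem S; first by rewrite !big_set0 cards0.
have disXD : {in S :\ i0 &, forall i j, i != j -> [disjoint X i & X j]}.
  by move=> i j /setD1P[_ iS] /setD1P[_ jS]; exact: disX.
rewrite (big_setD1 i0 i0S) (big_setD1 i0 i0S) /= cardsU.
have /disjoint_setI0 -> : [disjoint X i0 & \bigcup_(i in S :\ i0) X i].
  apply/bigcup_disjointP => i /setD1P[ii0 iS]; apply: disX => //.
  by rewrite eq_sym.
rewrite cards0 subn0 (IH (S :\ i0)) //.
by rewrite -ltnS (leq_trans _ ltSs) // [#|S|](cardsD1 i0) i0S.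
Qed.

Section Dynamics.

Variables (R : numDomainType) (N : finType) (layer : N -> nat) (w : rel N).
Variables (tau : R) (failed inp : pred N).

Lemma fires0 v :
  fires layer w tau failed inp 0 v = [&& layer v == 0%N, inp v & ~~ failed v].
Proof. by []. Qed.

Lemma firesS t v : fires layer w tau failed inp t.+1 v =
  [&& ~~ failed v, layer v != 0%N &
      tau <= \sum_(u | (layer u).+1 == layer v)
               (((w u v && fires layer w tau failed inp t u) : nat)%:R : R)].
Proof. by []. Qed.

End Dynamics.

Section Implementation.

Variables (R : realFieldType) (D : finType) (level : D -> nat).
Variables (C : {set D}) (children : D -> {set D}).
Hypothesis children_sub : forall c, c \in C -> (0 < level c)%N ->
  children c \subset [set c' in C | (level c').+1 == level c].

Let concept_C c : c \in C -> concept level C c.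
Proof. by rewrite /concept => ->; rewrite orbT. Qed.

Variables (N1 : finType) (layer1 : N1 -> nat) (rep : D -> N1).
Hypothesis rep_inj : forall c c', concept level C c -> concept level C c' ->
  rep c = rep c' -> c = c'.

Variables (r2 eps a : R) (k m : nat).
Variables (N2 : finType) (layer2 : N2 -> nat) (reps : D -> {set N2}).
Variables (E : rel N2) (F : {set N2}).
Hypothesis reps_layer :
  forall c, concept level C c -> forall v, v \in reps c -> layer2 v = level c.
Hypothesis reps_disjoint : forall c c', concept level C c -> concept level C c' ->
  c != c' -> [disjoint reps c & reps c'].
Hypothesis E_indegree : forall c c', c \in C -> (0 < level c)%N -> c' \in children c ->
  forall v, v \in reps c -> a * m%:R * (1 - eps) <= #|[set u in reps c' :\: F | E u v]|%:R.
Hypotheses (a_ge0 : 0 <= a) (eps_le1 : eps <= 1).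

Variable B : {set D}.
Hypothesis B_sub : B \subset [set c in C | level c == 0%N].

Let xA1 := fires layer1 (A1_w level C children rep) (r2 * k%:R) pred0 (A1_input rep B).
Let xL := fires layer2 E (a * r2 * k%:R * m%:R * (1 - eps)) (fun v => v \in F)
  (L_input reps B).

Lemma A1_fires0_input c : concept level C c -> xA1 0 (rep c) -> c \in B.
Proof.
move=> cc /and3P[_ /existsP[b /andP[bB /eqP rcb]] _].
have /setIdP[_ /eqP lb] := subsetP B_sub b bB.
by rewrite (rep_inj cc _ rcb) // /concept lb.
Qed.

Lemma L_fires0_of_input c v : c \in B -> v \in reps c :\: F -> xL 0 v.
Proof.
move=> cB /setDP[vc vF]; have /setIdP[cC /eqP lc] := subsetP B_sub c cB.
rewrite /xL fires0 (reps_layer (concept_C cC) vc) lc vF andbT.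
by apply/existsP; exists c; rewrite cB.
Qed.

Lemma A1_fired_children c l : c \in C -> level c = l.+1 -> xA1 l.+1 (rep c) ->
  r2 * k%:R <= #|[set c' in children c | xA1 l (rep c')]|%:R.
Proof.
move=> cC lc; rewrite /xA1 firesS -/xA1 => /and3P[_ _].
rewrite -natr_sum sum_nat_bool_card => fired; apply: (le_trans fired).
rewrite ler_nat (leq_trans _ (leq_imset_card rep _)) //.
apply: subset_leq_card; apply/subsetP => u /setIdP[_ /andP[]].
case/existsP => c1 /existsP[c' /and5P[c1C _ c'c /eqP rcc1 /eqP ->]] xc'.
rewrite (rep_inj (concept_C cC) (concept_C c1C) rcc1).
by apply: imset_f; rewrite inE c'c.
Qed.

Lemma L_fires_of_children c l (S : {set D}) v :
  c \in C -> level c = l.+1 -> S \subset children c -> r2 * k%:R <= #|S|%:R ->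
  (forall c' u, c' \in S -> u \in reps c' :\: F -> xL l u) ->
  v \in reps c :\: F -> xL l.+1 v.
Proof.
move=> cC lc Sc rS Sfire /setDP[vc vF].
have c_pos : (0 < level c)%N by rewrite lc.
have S_level c' : c' \in S -> c' \in C /\ level c' = l.
  move=> /(subsetP Sc) /(subsetP (children_sub cC c_pos)) /setIdP[c'C].
  by rewrite lc eqSS => /eqP.
pose X c' := [set u in reps c' :\: F | E u v].
have X_large : #|S|%:R * (a * m%:R * (1 - eps)) <= (\sum_(c' in S) #|X c'|)%:R.
  rewrite mulr_natl -sumr_const natr_sum; apply: ler_sum => c' c'S.
  exact: (E_indegree cC c_pos (subsetP Sc _ c'S) vc).
have X_fire : (\sum_(c' in S) #|X c'| <=
    #|[set u | (layer2 u).+1 == l.+1 & E u v && xL l u]|)%N.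
  rewrite -card_bigcup_disjoint; last first.
    move=> i j iS jS ij; have [[iC _] [jC _]] := (S_level i iS, S_level j jS).
    have := reps_disjoint (concept_C iC) (concept_C jC) ij.
    by apply: disjointW; apply/subsetP => u /setIdP[/setDP[]].
  apply: subset_leq_card; apply/bigcupsP => c' c'S; apply/subsetP => u.
  rewrite !inE => /andP[/andP[uF uc] Euv]; have [c'C lc'] := S_level c' c'S.
  by rewrite (reps_layer (concept_C c'C) uc) lc' Euv (Sfire c') ?eqxx // inE uF uc.
rewrite /xL firesS -/xL vF (reps_layer (concept_C cC) vc) lc /=.
rewrite -natr_sum sum_nat_bool_card.
have -> : a * r2 * k%:R * m%:R * (1 - eps) = r2 * k%:R * (a * m%:R * (1 - eps)).
  by ring.
have am_ge0 : 0 <= a * m%:R * (1 - eps) by rewrite !mulr_ge0 // subr_ge0.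
apply: le_trans (ler_wpM2r am_ge0 rS) _; apply: le_trans X_large _.
by rewrite ler_nat; exact: X_fire.
Qed.

Lemma reps_fire_of_rep_fires c : concept level C c -> xA1 (level c) (rep c) ->
  forall v, v \in reps c :\: F -> xL (level c) v.
Proof.
move lc: (level c) => l; elim: l c lc => [|l IH] c lc cc fc.
  by move=> v; apply: L_fires0_of_input; exact: A1_fires0_input cc fc.
have cC : c \in C by move: cc; rewrite /concept lc.
move=> v vcF; apply: (L_fires_of_children cC lc _ (A1_fired_children cC lc fc) _ vcF).
  by rewrite setIdE subsetIl.
move=> c' u /setIdP[c'c fc']; have c_pos : (0 < level c)%N by rewrite lc.
have /setIdP[c'C] := subsetP (children_sub cC c_pos) c' c'c.
rewrite lc eqSS => /eqP lc'.
exact: IH lc' (concept_C c'C) fc' u.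
Qed.

End Implementation.

Theorem theorem8p1 (R : realFieldType) (D : finType) (lmax n k : nat)
  (level : D -> nat) (C : {set D}) (children : D -> {set D})
  (r1 r2 eps a : R) (m : nat)
  (N1 : finType) (layer1 : N1 -> nat) (rep : D -> N1)
  (N2 : finType) (layer2 : N2 -> nat) (reps : D -> {set N2})
  (E : rel N2) (F : {set N2}) :
  (0 < lmax)%N -> (0 < n)%N -> (0 < k)%N ->
  concept_hierarchy lmax n k level C children ->
  0 <= r1 <= 1 -> 0 <= r2 <= 1 -> 0 <= eps <= 1 -> 0 < a ->
  r1 <= a * r2 * (1 - eps) -> (0 < m)%N ->
  (forall u, layer1 u <= lmax)%N -> A1_rep_ok level C layer1 rep ->
  (forall u, layer2 u <= lmax)%N -> L_ok level C children layer2 reps E F eps a m ->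
  forall B : {set D}, B \subset [set c in C | level c == 0%N] ->
  forall c : D, concept level C c ->
  fires layer1 (A1_w level C children rep) (r2 * k%:R) pred0 (A1_input rep B)
        (level c) (rep c) ->
  m%:R * (1 - eps) <=
    #|[set v in reps c |
        fires layer2 E (a * r2 * k%:R * m%:R * (1 - eps)) (fun v => v \in F)
              (L_input reps B) (level c) v]|%:R.
Proof.
move=> _ _ _ [_ _ children_sub _ _] _ _ /andP[_ eps_le1] a_gt0 _ _ _ [rep_inj _] _
  [[_ reps_layer] reps_disjoint _ reps_nonfailed E_indegree] B B_sub c cc fc.
apply: le_trans (reps_nonfailed c cc) _; rewrite ler_nat; apply: subset_leq_card.
apply/subsetP => v vcF; have /setDP[vc _] := vcF; rewrite inE vc.
exact: (reps_fire_of_rep_fires children_sub rep_inj reps_layer reps_disjoint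
  E_indegree (ltW a_gt0) eps_le1 B_sub cc fc vcF).
Qed.
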